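(* Let $G_1,\ldots,G_p$ be positive (entrywise) real $m\times n$ matrices, let $R_1,\ldots,R_p$ be positive real $m$-vectors and $C_1,\ldots,C_p$ positive real $n$-vectors such that $|R_1|=\cdots=|R_p|=|C_1|=\cdots=|C_p|$. Let $\alpha_1,\ldots,\alpha_p\ge0$ with $\sum_k\alpha_k=1$, and set $G=\sum_k\alpha_kG_k$, $R=\sum_k\alpha_kR_k$, $C=\sum_k\alpha_kC_k$. Then $$f(G;R,C)\ \ge\ \prod_{k=1}^p f^{\alpha_k}(G_k;R_k,C_k).$$
   Context: For a vector $B=(b_1,\ldots,b_l)$, $|B|=\sum_i b_i$. For a positive $m\times n$ matrix $G=(g_{ij})$ and vectors $x=(\xi_1,\ldots,\xi_m)$, $y=(\eta_1,\ldots,\eta_n)$, let $F(G;x,y)=\sum_{i=1}^m\sum_{j=1}^n g_{ij}\xi_i\eta_j$. For positive vectors $R=(r_1,\ldots,r_m)$, $C=(c_1,\ldots,c_n)$, let $f(G;R,C)$ be the minimum of $F(G;x,y)$ over all $x\in\mathbb{R}_{>0}^m$, $y\in\mathbb{R}_{>0}^n$ with $\prod_{i=1}^m\xi_i^{r_i}=\prod_{j=1}^n\eta_j^{c_j}=1$ (this minimum is attained). *)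

From HB Require Import structures.
From mathcomp Require Import all_boot all_order all_algebra.
From mathcomp Require Import all_classical all_reals all_analysis.
Set Implicit Arguments. Unset Strict Implicit. Unset Printing Implicit Defensive.
Import Order.TTheory GRing.Theory Num.Theory.
Local Open Scope classical_set_scope.
Local Open Scope ring_scope.

Definition vsum (R : realType) (l : nat) (B : 'I_l -> R) : R := \sum_(i < l) B i.

Definition Fform (R : realType) (m n : nat) (G : 'M[R]_(m, n))
  (x : 'I_m -> R) (y : 'I_n -> R) : R :=
  \sum_(i < m) \sum_(j < n) G i j * x i * y j.

Definition feasible (R : realType) (l : nat) (r : 'I_l -> R) (x : 'I_l -> R) : Prop :=
  (forall i, 0 < x i) /\ \prod_(i < l) (x i `^ r i) = 1.

(* f(G;R,C): the minimum (which is attained, hence equal to the infimum)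
   of F(G;x,y) over feasible x, y. *)
Definition fmin (R : realType) (m n : nat) (G : 'M[R]_(m, n))
  (r : 'I_m -> R) (c : 'I_n -> R) : R :=
  inf [set Fform G x y | x in [set x | feasible r x] & y in [set y | feasible c y]].

From HB Require Import structures.
From mathcomp Require Import all_boot all_order all_algebra.
From mathcomp Require Import all_classical all_reals all_analysis.
From mathcomp Require Import ring.
Import Order.TTheory GRing.Theory Num.Theory.
Local Open Scope ring_scope.

(** Take x, y feasible for (R, C).  Rescaling them by exp(-u_k) and exp(-v_k),
   with u_k = (sum_i R_k,i ln xi_i) / |R_k| and v_k defined likewise, makes
   them feasible for (R_k, C_k), so f(G_k; R_k, C_k) <= F(G_k; x, y) exp(-u_k - v_k).
   As all |R_k| and |C_k| equal a common s, sum_k alpha_k u_k is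
   (sum_i R_i ln xi_i) / s = 0 for R = sum_k alpha_k R_k, and likewise for v; hence the exponentials cancel
   in the weighted geometric mean, and the weighted AM-GM inequality bounds
   prod_k F(G_k; x, y)^alpha_k by sum_k alpha_k F(G_k; x, y) = F(G; x, y). *)

Set Implicit Arguments.
Unset Strict Implicit.
Unset Printing Implicit Defensive.

Section MatrixScaling.
Variable R : realType.

Lemma prod_powR_mul_expR p (a t alpha : 'I_p -> R) : (forall k, 0 <= a k) ->
  \prod_(k < p) (a k * expR (t k)) `^ alpha k
  = \prod_(k < p) a k `^ alpha k * expR (\sum_(k < p) alpha k * t k).
Proof.
move=> a_ge0; rewrite expR_sum -big_split /=; apply: eq_bigr => k _.
by rewrite powRM ?expR_ge0 // -expRM (mulrC (t k)).
Qed.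

Lemma prod_powR_le_sum_gt0 p (a alpha : 'I_p -> R) :
  (forall k, 0 < a k) -> (forall k, 0 <= alpha k) -> \sum_(k < p) alpha k = 1 ->
  \prod_(k < p) a k `^ alpha k <= \sum_(k < p) alpha k * a k.
Proof.
move=> a_gt0 alpha_ge0 alpha1.
set S := \sum_(k < p) alpha k * ln (a k).
have -> : \prod_(k < p) a k `^ alpha k = expR S.
  by rewrite expR_sum; apply: eq_bigr => k _; rewrite /powR gt_eqF.
(* Tangent line of [expR] at [S], weighted and summed. *)
have : \sum_(k < p) alpha k * (1 + (ln (a k) - S))
         <= \sum_(k < p) alpha k * a k / expR S.
  apply: ler_sum => k _; rewrite -mulrA ler_wpM2l //.
  by rewrite -{2}(lnK (a_gt0 k)) -expRB expR_ge1Dx.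
have -> : \sum_(k < p) alpha k * (1 + (ln (a k) - S)) = 1.
  under eq_bigr do rewrite mulrDr mulr1 mulrBr.
  by rewrite big_split sumrB -big_distrl /= alpha1 mul1r subrr addr0.
by rewrite -big_distrl /= ler_pdivlMr ?expR_gt0 // mul1r.
Qed.

Lemma prod_powR_le_sum p (a alpha : 'I_p -> R) :
  (forall k, 0 <= a k) -> (forall k, 0 <= alpha k) -> \sum_(k < p) alpha k = 1 ->
  \prod_(k < p) a k `^ alpha k <= \sum_(k < p) alpha k * a k.
Proof.
move=> a_ge0 alpha_ge0 alpha1.
have [/existsP [k /andP [/eqP ak0 alphak]]|] :=
  boolP [exists k, (a k == 0) && (alpha k != 0)].
  rewrite (bigD1 k) //= ak0 powR0 // mul0r.
  by apply: sumr_ge0 => i _; exact: mulr_ge0.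
rewrite negb_exists => /forallP a_neq0.
(* Since [0 `^ 0 = 1], zero entries of weight zero may be replaced by [1]. *)
pose a' k := if alpha k == 0 then 1 else a k.
have a'_gt0 k : 0 < a' k.
  rewrite /a'; case: eqP => [_|/eqP alphak] //.
  by rewrite lt_def a_ge0 andbT; move: (a_neq0 k); rewrite alphak andbT.
have -> : \prod_(k < p) a k `^ alpha k = \prod_(k < p) a' k `^ alpha k.
  by apply: eq_bigr => k _; rewrite /a'; case: eqP => [->|]; rewrite ?powRr0.
have -> : \sum_(k < p) alpha k * a k = \sum_(k < p) alpha k * a' k.
  by apply: eq_bigr => k _; rewrite /a'; case: eqP => [->|]; rewrite ?mul0r.
exact: prod_powR_le_sum_gt0.
Qed.

Definition ln_monomial l (r x : 'I_l -> R) : R := \sum_(i < l) r i * ln (x i).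

Lemma feasibleP l (r x : 'I_l -> R) : (forall i, 0 < x i) ->
  feasible r x <-> ln_monomial r x = 0.
Proof.
move=> x_gt0; have prodE : \prod_(i < l) x i `^ r i = expR (ln_monomial r x).
  by rewrite expR_sum; apply: eq_bigr => i _; rewrite /powR gt_eqF.
rewrite /feasible prodE -expR0; split=> [[_ /expR_inj]|->] //.
Qed.

Lemma feasible1 l (r : 'I_l -> R) : feasible r (fun=> 1).
Proof.
by apply/feasibleP => //; rewrite /ln_monomial big1 // => i _; rewrite ln1 mulr0.
Qed.

Lemma ln_monomialMr l (r x : 'I_l -> R) c : (forall i, 0 < x i) -> 0 < c ->
  ln_monomial r (fun i => x i * c) = ln_monomial r x + vsum r * ln c.
Proof.
move=> x_gt0 c_gt0; rewrite /ln_monomial /vsum big_distrl -big_split /=.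
by apply: eq_bigr => i _; rewrite lnM ?posrE // mulrDr.
Qed.

Lemma feasible_normalize l (r x : 'I_l -> R) :
  (forall i, 0 < r i) -> (forall i, 0 < x i) ->
  feasible r (fun i => x i * expR (- (ln_monomial r x / vsum r))).
Proof.
case: l r x => [|l] r x r_gt0 x_gt0.
  by split=> [[] //|]; rewrite big_ord0.
have r_sum_gt0 : 0 < vsum r.
  by rewrite /vsum big_ord_recl ltr_pwDl // sumr_ge0 // => i _; exact: ltW.
apply/feasibleP => [i|]; first by rewrite mulr_gt0 ?expR_gt0.
by rewrite ln_monomialMr ?expR_gt0 // expRK mulrN mulrC divfK ?gt_eqF // subrr.
Qed.

Lemma ln_monomial_mix p l (alpha : 'I_p -> R) (rs : 'I_p -> 'I_l -> R) x s :
  (forall k, vsum (rs k) = s) ->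
  \sum_(k < p) alpha k * (ln_monomial (rs k) x / vsum (rs k))
  = ln_monomial (fun i => \sum_(k < p) alpha k * rs k i) x / s.
Proof.
move=> rs_sum; under eq_bigr do rewrite rs_sum mulrA; rewrite -big_distrl /=.
congr (_ / s); rewrite /ln_monomial; under eq_bigr do rewrite big_distrr.
rewrite exchange_big /=; apply: eq_bigr => i _; rewrite big_distrl /=.
by apply: eq_bigr => k _; rewrite mulrA.
Qed.

Lemma Fform_ge0 m n (G : 'M[R]_(m, n)) x y :
  (forall i j, 0 <= G i j) -> (forall i, 0 < x i) -> (forall j, 0 < y j) ->
  0 <= Fform G x y.
Proof.
move=> G_ge0 x_gt0 y_gt0; apply: sumr_ge0 => i _; apply: sumr_ge0 => j _.
by rewrite !mulr_ge0 // ltW.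
Qed.

Lemma FformZ m n (G : 'M[R]_(m, n)) x y a b :
  Fform G (fun i => x i * a) (fun j => y j * b) = Fform G x y * (a * b).
Proof.
rewrite /Fform big_distrl; apply: eq_bigr => i _.
by rewrite big_distrl; apply: eq_bigr => j _ /=; ring.
Qed.

Lemma Fform_sum m n p (alpha : 'I_p -> R) (Gs : 'I_p -> 'M[R]_(m, n)) x y :
  Fform (\sum_(k < p) alpha k *: Gs k) x y = \sum_(k < p) alpha k * Fform (Gs k) x y.
Proof.
rewrite /Fform; under [RHS]eq_bigr do rewrite big_distrr.
rewrite [RHS]exchange_big /=; apply: eq_bigr => i _.
under [RHS]eq_bigr do rewrite big_distrr.
rewrite [RHS]exchange_big /=; apply: eq_bigr => j _; rewrite summxE !big_distrl /=.
by apply: eq_bigr => k _; rewrite mxE !mulrA.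
Qed.

Section Fmin.
Variables (m n : nat) (G : 'M[R]_(m, n)) (r : 'I_m -> R) (c : 'I_n -> R).

Lemma fmin_ge b :
  (forall x y, feasible r x -> feasible c y -> b <= Fform G x y) -> b <= fmin G r c.
Proof.
move=> lb; apply: lb_le_inf => [|_ [x fx [y fy <-]]]; last exact: lb.
exists (Fform G (fun=> 1) (fun=> 1)), (fun=> 1); first exact: feasible1.
by exists (fun=> 1); first exact: feasible1.
Qed.

Hypothesis G_ge0 : forall i j, 0 <= G i j.

Lemma fmin_ge0 : 0 <= fmin G r c.
Proof. by apply: fmin_ge => x y [x_gt0 _] [y_gt0 _]; exact: Fform_ge0. Qed.

Lemma fmin_le x y : feasible r x -> feasible c y -> fmin G r c <= Fform G x y.
Proof.
move=> fx fy; apply: ge_inf; last by exists x => //; exists y.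
by exists 0 => _ [x' [x'_gt0 _] [y' [y'_gt0 _] <-]]; exact: Fform_ge0.
Qed.

Lemma fmin_le_normalize x y :
  (forall i, 0 < r i) -> (forall j, 0 < c j) ->
  (forall i, 0 < x i) -> (forall j, 0 < y j) ->
  fmin G r c <= Fform G x y
                * expR (- (ln_monomial r x / vsum r + ln_monomial c y / vsum c)).
Proof.
move=> r_gt0 c_gt0 x_gt0 y_gt0; rewrite opprD expRD -FformZ.
by apply: fmin_le; apply: feasible_normalize.
Qed.

End Fmin.
End MatrixScaling.

Theorem lemma4p2 (R : realType) (m n p : nat)
  (Gs : 'I_p -> 'M[R]_(m, n)) (Rs : 'I_p -> 'I_m -> R) (Cs : 'I_p -> 'I_n -> R)
  (alpha : 'I_p -> R)
  (hG : forall k i j, 0 < Gs k i j)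
  (hR : forall k i, 0 < Rs k i)
  (hC : forall k j, 0 < Cs k j)
  (hsum : exists s : R, forall k, vsum (Rs k) = s /\ vsum (Cs k) = s)
  (halpha : forall k, 0 <= alpha k)
  (halpha1 : \sum_(k < p) alpha k = 1) :
  let G := \sum_(k < p) alpha k *: Gs k in
  let Rv := fun i => \sum_(k < p) alpha k * Rs k i in
  let Cv := fun j => \sum_(k < p) alpha k * Cs k j in
  \prod_(k < p) (fmin (Gs k) (Rs k) (Cs k) `^ alpha k) <= fmin G Rv Cv.
Proof.
rewrite /=; have [s sum_s] := hsum.
have Gs_ge0 k i j : 0 <= Gs k i j by exact: ltW.
apply: fmin_ge => x y fx fy; have [x_gt0 _] := fx; have [y_gt0 _] := fy.
pose t k := - (ln_monomial (Rs k) x / vsum (Rs k) + ln_monomial (Cs k) y / vsum (Cs k)).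
have mean_t0 : \sum_(k < p) alpha k * t k = 0.
  under eq_bigr do rewrite mulrN mulrDr; rewrite sumrN big_split /=.
  rewrite (ln_monomial_mix _ _ (fun k => (sum_s k).1)).
  rewrite (ln_monomial_mix _ _ (fun k => (sum_s k).2)).
  by rewrite (feasibleP _ x_gt0).1 // (feasibleP _ y_gt0).1 // mul0r addr0 oppr0.
apply: (@le_trans _ _ (\prod_(k < p) (Fform (Gs k) x y * expR (t k)) `^ alpha k)).
  apply: ler_prod => k _; rewrite powR_ge0 ge0_ler_powR ?nnegrE ?fmin_ge0 //.
    by rewrite mulr_ge0 ?expR_ge0 ?Fform_ge0.
  exact: fmin_le_normalize.
rewrite prod_powR_mul_expR => [|k]; last exact: Fform_ge0.
rewrite mean_t0 expR0 mulr1 Fform_sum.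
by apply: prod_powR_le_sum => // k; exact: Fform_ge0.
Qed.
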